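(* In the local model, let $p$ be the node ($x=y=0$) of a fibre over a point $b_0$ with $t(b_0)=0$. The morphism $$\sigma=((-1)^m\sigma^x_m,\dots,-\sigma^x_1,(-1)^m\sigma^y_m,\dots,-\sigma^y_1,\pi^{(m)}):U^{(m)}_B\to\mathbb A^{2m}\times B$$ is a closed embedding in a neighbourhood of the cycle $mp$. (Equivalently: every $\mathfrak S_m$-invariant polynomial in $x_1,\dots,x_m,y_1,\dots,y_m$ is, modulo the relations $x_iy_i=t$, a polynomial in the $\sigma^x_i,\sigma^y_j$ and $t$.)
   Context: Local model: $B$ is an irreducible base with a regular function $t$, and $U\subset\mathbb A^2_{x,y}\times B$ is the family of curves $\{xy=t\}$ over $B$. Thus $U^m_B\subset\mathbb A^{2m}\times B$ is given by $x_1y_1=\dots=x_my_m=t$, $U^{(m)}_B=U^m_B/\mathfrak S_m$ is the relative symmetric product with structure map $\pi^{(m)}:U^{(m)}_B\to B$. $\sigma^x_i$ and $\sigma^y_i$ ($0\le i\le m$, $\sigma_0=1$) denote the elementary symmetric functions of $x_1,\dots,x_m$ and of $y_1,\dots,y_m$, viewed as functions on $U^{(m)}_B$. *)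

From HB Require Import structures.
From mathcomp Require Import all_boot all_order all_algebra all_fingroup.
Set Implicit Arguments. Unset Strict Implicit. Unset Printing Implicit Defensive.
Import GRing.Theory.
Local Open Scope ring_scope.

(* Multivariate polynomials in n variables over R, as iterated univariate
   polynomials: mpoly R 0 = R, mpoly R n.+1 = {poly (mpoly R n)}.
   Variable number 0 is the outermost indeterminate. *)
Fixpoint mpoly (R : comNzRingType) (n : nat) : comNzRingType :=
  match n with
  | 0 => R
  | n'.+1 => ({poly (mpoly R n')} : comNzRingType)
  end.

Fixpoint mconst (R : comNzRingType) (n : nat) : R -> mpoly R n :=
  match n return R -> mpoly R n with
  | 0 => fun c => c
  | n'.+1 => fun c => (@mconst R n' c)%:P
  end.

(* the i-th variable (0 if i >= n) *)
Fixpoint mvar (R : comNzRingType) (n : nat) (i : nat) : mpoly R n :=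
  match n return mpoly R n with
  | 0 => 0
  | n'.+1 => if i is i'.+1 then (@mvar R n' i')%:P else 'X
  end.

Fixpoint meval (R : comNzRingType) (S : comNzRingType) (f : R -> S)
    (n : nat) (v : nat -> S) : mpoly R n -> S :=
  match n return mpoly R n -> S with
  | 0 => f
  | n'.+1 => fun p => (map_poly (@meval R S f n' (fun i => v i.+1)) p).[v 0]
  end.

Definition xv (R : comNzRingType) (m : nat) (i : 'I_m) : mpoly R (m + m) :=
  @mvar R (m + m) i.
Definition yv (R : comNzRingType) (m : nat) (i : 'I_m) : mpoly R (m + m) :=
  @mvar R (m + m) (m + i)%N.

(* simultaneous permutation action of s on the x's and the y's *)
Definition perm_point (R : comNzRingType) (m : nat) (s : {perm 'I_m})
  (k : nat) : mpoly R (m + m) :=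
  match (insub k : option 'I_m) with
  | Some i => @xv R m (s i)
  | None => match (insub (k - m)%N : option 'I_m) with
            | Some i => @yv R m (s i)
            | None => 0
            end
  end.

Definition perm_act (R : comNzRingType) (m : nat) (s : {perm 'I_m})
  (P : mpoly R (m + m)) : mpoly R (m + m) :=
  @meval R _ (@mconst R (m + m)) (m + m) (@perm_point R m s) P.

Definition sym_invariant (R : comNzRingType) (m : nat) (P : mpoly R (m + m)) :=
  forall s : {perm 'I_m}, perm_act s P = P.

Definition sigx (R : comNzRingType) (m k : nat) : mpoly R (m + m) :=
  \sum_(I : {set 'I_m} | #|I| == k) \prod_(j in I) @xv R m j.
Definition sigy (R : comNzRingType) (m k : nat) : mpoly R (m + m) :=
  \sum_(I : {set 'I_m} | #|I| == k) \prod_(j in I) @yv R m j.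

(* substitute (sigma^x_1..sigma^x_m, sigma^y_1..sigma^y_m) into Q *)
Definition sig_point (R : comNzRingType) (m : nat) (k : nat) : mpoly R (m + m) :=
  if (k < m)%N then @sigx R m k.+1 else @sigy R m (k - m)%N.+1.

Definition eval_at_sigma (R : comNzRingType) (m : nat) (Q : mpoly R (m + m))
  : mpoly R (m + m) :=
  @meval R _ (@mconst R (m + m)) (m + m) (@sig_point R m) Q.

Definition in_rel_ideal (R : comNzRingType) (m : nat) (t : R)
  (P : mpoly R (m + m)) :=
  exists c : 'I_m -> mpoly R (m + m),
    P = \sum_(i < m) c i * (@xv R m i * @yv R m i - @mconst R (m + m) t).

From HB Require Import structures.
From mathcomp Require Import all_boot all_order all_algebra all_fingroup.
From mathcomp Require Import ring.
Set Implicit Arguments. Unset Strict Implicit. Unset Printing Implicit Defensive.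
Import GRing.Theory.
Local Open Scope ring_scope.

(* Let G be the set of polynomials P in the x_i, y_i that are congruent,
   modulo the ideal I = (x_i y_i - t), to a polynomial in the sigma^x_k,
   sigma^y_k (with coefficients in R).  The proof shows that every invariant
   P lies in G, in four steps:
   1. G is closed under the ring operations and, since the positive integers
      are units in R, under division by positive integers.
   2. (Newton) Any such subring containing the elementary symmetric functions
      of z_1..z_m contains the power sums \sum_l z_l^d; hence G contains the
      power sums of the x's and of the y's.  Modulo I, the polarized power
      sum \sum_l x_l^a y_l^b equals t^b \sum_l x_l^(a-b) (for b <= a), so G
      contains all polarized power sums.
   3. (Polarization) A subring closed under division by positive integers
      that contains the polarized power sums contains every symmetrized
      monomial \sum_s \prod_i x_(s i)^(a_i) y_(s i)^(b_i); this is proved by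
      peeling off one variable at a time.
   4. Symmetrizing the monomial expansion of an invariant P gives m! P as a
      combination of symmetrized monomials; dividing by m! gives P in G. *)

Lemma map_horner_morphism (A S : comNzRingType) (g : A -> S) (x : S) :
  zmod_morphism g -> monoid_morphism g ->
  zmod_morphism (fun p : {poly A} => (map_poly g p).[x]) /\
  monoid_morphism (fun p : {poly A} => (map_poly g p).[x]).
Proof.
move=> gB gM.
pose gr : {rmorphism A -> S} := HB.pack g (GRing.isZmodMorphism.Build _ _ g gB)
  (GRing.isMonoidMorphism.Build _ _ g gM).
have -> : (fun p => (map_poly g p).[x]) = (fun p => (map_poly gr p).[x]) by [].
split; first by move=> p q; rewrite rmorphB hornerD hornerN.
split; first by rewrite rmorph1 hornerC.
by move=> p q; rewrite rmorphM hornerM.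
Qed.

Section MultivariatePolynomials.
Variable R : comNzRingType.

Lemma meval_is_rmorphism n : forall (S : comNzRingType) (f : {rmorphism R -> S}) v,
  zmod_morphism (@meval R S f n v) /\ monoid_morphism (@meval R S f n v).
Proof.
elim: n => [|n IH] S f v /=.
  by split; [exact: rmorphB | split; [exact: rmorph1 | exact: rmorphM]].
by have [gB gM] := IH S f (fun i => v i.+1); apply: map_horner_morphism.
Qed.

HB.instance Definition _ (S : comNzRingType) (f : {rmorphism R -> S}) n v :=
  GRing.isZmodMorphism.Build _ _ (@meval R S f n v)
    (proj1 (meval_is_rmorphism n f v)).
HB.instance Definition _ (S : comNzRingType) (f : {rmorphism R -> S}) n v :=
  GRing.isMonoidMorphism.Build _ _ (@meval R S f n v)
    (proj2 (meval_is_rmorphism n f v)).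

Lemma mconst_is_rmorphism n :
  zmod_morphism (@mconst R n) /\ monoid_morphism (@mconst R n).
Proof.
elim: n => [|n [cB [c1 cM]]] //=.
split; first by move=> a b; rewrite cB polyCB.
by split=> [|a b]; rewrite ?c1 ?cM ?polyCM.
Qed.

HB.instance Definition _ n :=
  GRing.isZmodMorphism.Build _ _ (@mconst R n) (proj1 (mconst_is_rmorphism n)).
HB.instance Definition _ n :=
  GRing.isMonoidMorphism.Build _ _ (@mconst R n) (proj2 (mconst_is_rmorphism n)).

Lemma meval_const (S : comNzRingType) (f : {rmorphism R -> S}) n :
  forall v c, @meval R S f n v (mconst n c) = f c.
Proof. by elim: n => [|n IH] v c //=; rewrite map_polyC hornerC; apply: IH. Qed.

Lemma meval_var (S : comNzRingType) (f : {rmorphism R -> S}) n :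
  forall v i, @meval R S f n v (mvar R n i) = if (i < n)%N then v i else 0.
Proof.
elim: n => [|n IH] v [|i] /=; rewrite ?rmorph0 //.
  by rewrite map_polyX hornerX.
by rewrite map_polyC hornerC; apply: IH.
Qed.

Lemma mpoly_ind n (Pr : mpoly R n -> Prop) :
  (forall c, Pr (mconst n c)) ->
  (forall p q, Pr p -> Pr q -> Pr (p + q)) ->
  (forall k p, (k < n)%N -> Pr p -> Pr (mvar R n k * p)) ->
  forall p, Pr p.
Proof.
elim: n Pr => [|n IH] Pr hC hD hV p; first exact: hC.
have hPC : forall c : mpoly R n, Pr c%:P.
  apply: (IH (fun c => Pr c%:P)) => // [a b ha hb|k a hk ha].
    by rewrite polyCD; apply: hD.
  by rewrite polyCM; apply: (hV k.+1).
elim/poly_ind: p => [|q c hq]; first by rewrite -polyC0.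
by apply: hD => //; rewrite mulrC; apply: (hV 0%N).
Qed.

End MultivariatePolynomials.

Section RingClosedPredicates.
Variable A : comNzRingType.

(* Subrings of A given by a Prop-valued predicate (the subring we need is
   defined by an existential, so it is not a boolean predicate). *)
Record ring_closed (G : A -> Prop) : Prop := RingClosed {
  rc_nat : forall n : nat, G n%:R;
  rc_sub : forall a b, G a -> G b -> G (a - b);
  rc_mul : forall a b, G a -> G b -> G (a * b) }.

Definition div_closed (G : A -> Prop) := forall n a, G (a *+ n.+1) -> G a.

Variables (G : A -> Prop) (hG : ring_closed G).

Lemma rc_opp a : G a -> G (- a).
Proof. by move=> ha; rewrite -sub0r; apply: rc_sub (rc_nat hG 0) ha. Qed.

Lemma rc_add a b : G a -> G b -> G (a + b).
Proof. by move=> ha hb; rewrite -[b]opprK; apply: rc_sub (rc_opp hb). Qed.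

Lemma rc_sum (I : finType) (P : pred I) (F : I -> A) :
  (forall i, P i -> G (F i)) -> G (\sum_(i | P i) F i).
Proof. by apply: big_ind; [exact: (rc_nat hG 0) | exact: rc_add]. Qed.

End RingClosedPredicates.

Section PowerSums.
Variables (A : comNzRingType) (m : nat) (z : 'I_m -> A).

Definition esym r := \sum_(I : {set 'I_m} | #|I| == r) \prod_(j in I) z j.

(* The auxiliary sums F(r,d) = \sum_{|I|=r, l \notin I} z_I z_l^d of Newton's
   identities: F(0,d) is the d-th power sum and F(r,0) = (m-r) e_r. *)
Definition newton_sum r d := \sum_(I : {set 'I_m} | #|I| == r)
  \sum_(l | l \notin I) (\prod_(i in I) z i) * z l ^+ d.

Lemma newton_sum0 d : newton_sum 0%N d = \sum_l z l ^+ d.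
Proof.
rewrite /newton_sum (big_pred1 set0); last by move=> I; rewrite /= cards_eq0.
by apply: eq_big => [l|l _]; rewrite ?in_set0 // big_set0 mul1r.
Qed.

Lemma newton_sum_pow0 r : newton_sum r 0%N = (m - r)%:R * esym r.
Proof.
rewrite /newton_sum /esym mulr_sumr; apply: eq_bigr => I /eqP cardI.
rewrite [LHS](eq_bigr (fun=> \prod_(i in I) z i)) => [|l _]; last by rewrite expr0 mulr1.
rewrite sumr_const mulr_natl; congr (_ *+ _).
have compl := cardsC I; rewrite card_ord cardI in compl.
by rewrite -[in RHS]compl addKn; apply: eq_card => l; rewrite !inE.
Qed.

Lemma newton_step r d : esym r.+1 * newton_sum 0%N d = newton_sum r.+1 d + newton_sum r d.+1.
Proof.
rewrite newton_sum0 /esym mulr_suml.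
transitivity (\sum_(I : {set 'I_m} | #|I| == r.+1)
  (\sum_(l in I) (\prod_(i in I) z i) * z l ^+ d +
   \sum_(l | l \notin I) (\prod_(i in I) z i) * z l ^+ d)).
  by apply: eq_bigr => I _; rewrite mulr_sumr (bigID (mem I)).
rewrite big_split /= addrC; congr (_ + _).
rewrite /newton_sum (exchange_big_dep predT) //= [RHS](exchange_big_dep predT) //=.
apply: eq_bigr => l _.
rewrite (reindex_onto (fun J => l |: J) (fun I => I :\ l)); last first.
  by move=> I /andP[_ lI]; rewrite setD1K.
apply: eq_big => [J|J].
  have [lJ|lJ] /= := boolP (l \in J).
    rewrite andbF; apply/negbTE/negP => /andP[_ /eqP eJ].
    by move: lJ; rewrite -eJ !inE eqxx.
  by rewrite setU1K // eqxx cardsU1 lJ setU11 andbT add1n eqSS.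
move=> /andP[_ /eqP eJ]; have lJ : l \notin J by rewrite -eJ !inE eqxx.
by rewrite big_setU1 //= exprS mulrA [z l * _]mulrC.
Qed.

Lemma power_sum_closed (G : A -> Prop) : ring_closed G ->
  (forall r, G (esym r)) -> forall d, G (\sum_l z l ^+ d).
Proof.
move=> hG he d; rewrite -newton_sum0.
elim: d 0%N => [|d IH] r; first by rewrite newton_sum_pow0; apply: rc_mul (rc_nat hG _) _.
have -> : newton_sum r d.+1 = esym r.+1 * newton_sum 0%N d - newton_sum r.+1 d.
  by rewrite newton_step addrAC subrr add0r.
exact: rc_sub (rc_mul hG _ _) (IH _).
Qed.

End PowerSums.

Section Polarization.
Variables (A : comNzRingType) (m : nat) (x y : 'I_m -> A).

Definition psum (a b : nat) := \sum_(l < m) x l ^+ a * y l ^+ b.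
Definition symmon (a b : 'I_m -> nat) := \sum_(s : {perm 'I_m})
  \prod_(i < m) (x (s i) ^+ a i * y (s i) ^+ b i).

Definition addat (a : 'I_m -> nat) (j : 'I_m) (k : nat) : 'I_m -> nat :=
  fun i => if i == j then (a i + k)%N else a i.

Definition clearat (a : 'I_m -> nat) (j : 'I_m) : 'I_m -> nat :=
  fun i => if i == j then 0%N else a i.

Definition supp_below (k : nat) (a : 'I_m -> nat) :=
  forall i : 'I_m, (k <= i)%N -> a i = 0%N.

Lemma symmon_ext a a' b b' : a =1 a' -> b =1 b' -> symmon a b = symmon a' b'.
Proof. by move=> ea eb; apply: eq_bigr => s _; apply: eq_bigr => i _; rewrite ea eb. Qed.

Lemma symmon_perm (tau : {perm 'I_m}) a b : symmon (a \o tau) (b \o tau) = symmon a b.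
Proof.
rewrite /symmon (reindex_inj (mulgI tau)) /=; apply: eq_bigr => s _.
rewrite (reindex_inj (@perm_inj _ tau^-1)) /=; apply: eq_bigr => k _.
by rewrite permM permKV.
Qed.

Lemma symmon_mul_psum a b k l :
  symmon a b * psum k l = \sum_(j < m) symmon (addat a j k) (addat b j l).
Proof.
rewrite /symmon mulr_suml [RHS]exchange_big /=; apply: eq_bigr => s _.
rewrite /psum mulr_sumr (reindex_inj (@perm_inj _ s)) /=; apply: eq_bigr => j _.
rewrite (bigD1 j) //= [in RHS](bigD1 j) //= /addat eqxx !exprD.
rewrite [in RHS](eq_bigr (fun i => x (s i) ^+ a i * y (s i) ^+ b i)); last first.
  by move=> i /negbTE ->.
by ring.
Qed.

Lemma addat_clearat_tperm a (kk j : 'I_m) :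
  supp_below kk.+1 a -> (kk <= j)%N ->
  addat (clearat a kk) j (a kk) =1 a \o tperm j kk.
Proof.
move=> ha kkj i /=; rewrite /addat /clearat.
have aj : j != kk -> a j = 0%N.
  by move=> ne; apply: ha; rewrite ltn_neqAle kkj eq_sym ne.
case: tpermP => [->|->|/eqP/negbTE-> /eqP/negbTE->] //; rewrite eqxx.
  by case: eqP => [//|/eqP ne]; rewrite aj.
by case: eqP => [->|/eqP ne]; rewrite ?add0n // aj // eq_sym.
Qed.

Lemma symmon_peel a b (kk : 'I_m) :
  supp_below kk.+1 a -> supp_below kk.+1 b ->
  symmon a b *+ #|[pred j : 'I_m | (kk <= j)%N]| =
    symmon (clearat a kk) (clearat b kk) * psum (a kk) (b kk) -
    \sum_(j < m | (j < kk)%N)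
      symmon (addat (clearat a kk) j (a kk)) (addat (clearat b kk) j (b kk)).
Proof.
move=> ha hb; rewrite symmon_mul_psum (bigID (fun j : 'I_m => (j < kk)%N)) /=.
rewrite addrC addrK -sumr_const; apply: eq_big => [j|j]; first by rewrite inE leqNgt.
move=> kkj; rewrite inE in kkj.
rewrite -(symmon_perm (tperm j kk)); apply: symmon_ext => i;
  by rewrite addat_clearat_tperm.
Qed.

Variables (G : A -> Prop) (hG : ring_closed G) (hdiv : div_closed G)
  (hpsum : forall k l, G (psum k l)).

(* Induction on the support bound k, dividing out the multiplier of the
   peeling identity. *)
Lemma symmon_closed_below k : (k <= m)%N -> forall a b,
  supp_below k a -> supp_below k b -> G (symmon a b).
Proof.
elim: k => [|k IH] km a b ha hb.
  rewrite (symmon_ext (a' := fun _ => 0%N) (b' := fun _ => 0%N)) => [|i|i];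
    rewrite ?ha ?hb //.
  rewrite /symmon (eq_bigr (fun _ => 1)) => [|s _]; first by rewrite sumr_const; apply: rc_nat.
  by rewrite big1 // => i _; rewrite !expr0 mulr1.
pose kk := Ordinal km.
have below_clear c : supp_below k.+1 c -> supp_below k (clearat c kk).
  move=> hc i ki; rewrite /clearat; case: eqP => // /eqP ne.
  by apply: hc; rewrite ltn_neqAle ki eq_sym ne.
have below_addat c (j : 'I_m) : (j < k)%N -> supp_below k.+1 c ->
    supp_below k (addat (clearat c kk) j (c kk)).
  move=> jk hc i ki; rewrite /addat ifN; first exact: below_clear.
  by apply: contraTneq ki => ->; rewrite -ltnNge.
have peel := @symmon_peel a b kk ha hb.
have : (0 < #|[pred j : 'I_m | (kk <= j)%N]|)%N by apply/card_gt0P; exists kk; rewrite inE.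
case: #|_| peel => // c peel _; apply: (hdiv (n := c)); rewrite peel.
have km' : (k <= m)%N by exact: ltnW.
apply: (rc_sub hG).
  by apply: (rc_mul hG _ (hpsum _ _)); apply: IH => //; apply: below_clear.
by apply: (rc_sum hG) => j jk; apply: IH => //; apply: below_addat.
Qed.

Lemma symmon_closed a b : G (symmon a b).
Proof. by apply: (@symmon_closed_below m) => // i; rewrite leqNgt ltn_ord. Qed.

End Polarization.

Section LocalModel.
Variables (R : comUnitRingType) (t : R) (m : nat).
Local Notation A := (mpoly R (m + m)).
Local Notation cst := (@mconst R (m + m)).
Local Notation X := (@xv R m).
Local Notation Y := (@yv R m).
Local Notation evs := (@eval_at_sigma R m).
Local Notation inI := (@in_rel_ideal R m t).

(* The base ring contains Q: positive integers are invertible. *)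
Hypothesis nat_unit : forall n : nat, (n.+1%:R : R) \is a GRing.unit.

HB.instance Definition _ := GRing.isZmodMorphism.Build _ _ (@eval_at_sigma R m)
  (proj1 (meval_is_rmorphism _ _ _)).
HB.instance Definition _ := GRing.isMonoidMorphism.Build _ _ (@eval_at_sigma R m)
  (proj2 (meval_is_rmorphism _ _ _)).

Lemma rel_ideal0 : inI 0.
Proof. by exists (fun _ => 0); rewrite big1 // => i _; rewrite mul0r. Qed.

Lemma rel_idealD a b : inI a -> inI b -> inI (a + b).
Proof.
move=> [c ->] [c' ->]; exists (fun i => c i + c' i).
by rewrite -big_split; apply: eq_bigr => i _; rewrite mulrDl.
Qed.

Lemma rel_idealMl u a : inI a -> inI (u * a).
Proof.
move=> [c ->]; exists (fun i => u * c i).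
by rewrite mulr_sumr; apply: eq_bigr => i _; rewrite mulrA.
Qed.

Lemma rel_ideal_sum (I : finType) (P : pred I) (F : I -> A) :
  (forall i, P i -> inI (F i)) -> inI (\sum_(i | P i) F i).
Proof. by apply: big_ind; [exact: rel_ideal0 | exact: rel_idealD]. Qed.

Lemma rel_ideal_gen (l : 'I_m) : inI (X l * Y l - cst t).
Proof.
exists (fun i => if i == l then 1 else 0).
by rewrite (bigD1 l) //= eqxx mul1r big1 ?addr0 // => i /negbTE ->; rewrite mul0r.
Qed.

Lemma rel_ideal_pow (l : 'I_m) b : inI ((X l * Y l) ^+ b - cst t ^+ b).
Proof.
elim: b => [|b IH]; first by rewrite !expr0 subrr; apply: rel_ideal0.
have -> : (X l * Y l) ^+ b.+1 - cst t ^+ b.+1 =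
    X l * Y l * ((X l * Y l) ^+ b - cst t ^+ b) + cst t ^+ b * (X l * Y l - cst t).
  by rewrite !exprS; ring.
exact: rel_idealD (rel_idealMl _ IH) (rel_idealMl _ (rel_ideal_gen l)).
Qed.

Definition sigma_rep (P : A) := exists Q : A, inI (P - evs Q).

Lemma sigma_rep_ring_closed : ring_closed sigma_rep.
Proof.
split=> [n|a b [Qa ra] [Qb rb]|a b [Qa ra] [Qb rb]].
- by exists n%:R; rewrite rmorph_nat subrr; apply: rel_ideal0.
- exists (Qa - Qb).
  have -> : a - b - evs (Qa - Qb) = (a - evs Qa) + (-1) * (b - evs Qb).
    by rewrite rmorphB; ring.
  exact: rel_idealD ra (rel_idealMl _ rb).
- exists (Qa * Qb).
  have -> : a * b - evs (Qa * Qb) = b * (a - evs Qa) + evs Qa * (b - evs Qb).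
    by rewrite rmorphM; ring.
  exact: rel_idealD (rel_idealMl _ ra) (rel_idealMl _ rb).
Qed.

Lemma sigma_rep_const c : sigma_rep (cst c).
Proof. by exists (cst c); rewrite /eval_at_sigma meval_const subrr; apply: rel_ideal0. Qed.

Lemma sigma_rep_div_closed : div_closed sigma_rep.
Proof.
move=> n a rep_na.
have -> : a = cst (n.+1%:R)^-1 * (a *+ n.+1).
  by rewrite -[a *+ _]mulr_natl mulrA -(rmorph_nat cst) -rmorphM mulVr // rmorph1 mul1r.
by apply: (rc_mul sigma_rep_ring_closed) rep_na; apply: sigma_rep_const.
Qed.

Lemma sigma_rep_congr a b : sigma_rep a -> inI (b - a) -> sigma_rep b.
Proof.
move=> [Q rQ] rba; exists Q.
by rewrite -[b](subrK a) -addrA; apply: rel_idealD.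
Qed.

Lemma evs_var k : (k < m + m)%N -> evs (mvar R (m + m) k) = sig_point R m k.
Proof. by move=> km; rewrite /eval_at_sigma meval_var km. Qed.

(* e_0 = 1 and e_r = 0 for r > m, so it suffices to represent e_1..e_m. *)
Lemma sigma_rep_esym (z : 'I_m -> A) :
  (forall r, (r < m)%N -> sigma_rep (esym z r.+1)) -> forall r, sigma_rep (esym z r).
Proof.
move=> hz [|r].
  rewrite /esym (big_pred1 set0) => [|I]; last by rewrite /= cards_eq0.
  by rewrite big_set0; apply: (rc_nat sigma_rep_ring_closed 1).
have [mr|rm] := ltnP m r.+1; last exact: hz.
rewrite /esym big_pred0 => [|I]; first exact: (rc_nat sigma_rep_ring_closed 0).
by apply/negbTE/eqP => cardI; move: (max_card (mem I)); rewrite card_ord cardI leqNgt mr.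
Qed.

Lemma sigma_rep_esymX r : sigma_rep (esym X r).
Proof.
apply: sigma_rep_esym => {}r rm; exists (mvar R (m + m) r).
rewrite evs_var ?(leq_trans rm (leq_addr _ _)) // /sig_point rm subrr.
exact: rel_ideal0.
Qed.

Lemma sigma_rep_esymY r : sigma_rep (esym Y r).
Proof.
apply: sigma_rep_esym => {}r rm; exists (mvar R (m + m) (m + r)).
rewrite evs_var ?ltn_add2l // /sig_point ltnNge leq_addr /= addKn subrr.
exact: rel_ideal0.
Qed.

Lemma psum_reduce (z w : 'I_m -> A) k l : (l <= k)%N ->
  (forall i, z i * w i = X i * Y i) ->
  inI (psum z w k l - cst t ^+ l * \sum_i z i ^+ (k - l)).
Proof.
move=> lk zw; rewrite /psum mulr_sumr -sumrB; apply: rel_ideal_sum => i _.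
have -> : z i ^+ k * w i ^+ l - cst t ^+ l * z i ^+ (k - l) =
    z i ^+ (k - l) * ((z i * w i) ^+ l - cst t ^+ l).
  by rewrite mulrBr exprMn mulrA -exprD subnK // [_ * z i ^+ _]mulrC.
by rewrite zw; apply: rel_idealMl; apply: rel_ideal_pow.
Qed.

Lemma sigma_rep_psum k l : sigma_rep (psum X Y k l).
Proof.
have hG := sigma_rep_ring_closed.
have [lk|kl] := leqP l k.
  apply: sigma_rep_congr (psum_reduce lk (fun i => erefl)).
  rewrite -rmorphXn; apply: (rc_mul hG); first exact: sigma_rep_const.
  exact: power_sum_closed hG sigma_rep_esymX _.
have -> : psum X Y k l = psum Y X l k by apply: eq_bigr => i _; rewrite mulrC.
apply: sigma_rep_congr (psum_reduce (ltnW kl) (fun i => mulrC _ _)).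
rewrite -rmorphXn; apply: (rc_mul hG); first exact: sigma_rep_const.
exact: power_sum_closed hG sigma_rep_esymY _.
Qed.

Definition symmetrize (P : A) : A := \sum_(s : {perm 'I_m}) perm_act s P.

Definition monomial (a b : 'I_m -> nat) : A := \prod_(i < m) (X i ^+ a i * Y i ^+ b i).

Lemma perm_actD s : {morph @perm_act R m s : p q / p + q}.
Proof. by move=> p q; rewrite /perm_act rmorphD. Qed.

Lemma perm_actM s : {morph @perm_act R m s : p q / p * q}.
Proof. by move=> p q; rewrite /perm_act rmorphM. Qed.

Lemma perm_actX s n : {morph @perm_act R m s : p / p ^+ n}.
Proof. by move=> p; rewrite /perm_act rmorphXn. Qed.

Lemma perm_act_prod s (F : 'I_m -> A) :
  perm_act s (\prod_(i < m) F i) = \prod_(i < m) perm_act s (F i).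
Proof. by rewrite /perm_act rmorph_prod. Qed.

Lemma perm_act_const s c : perm_act s (cst c) = cst c.
Proof. exact: meval_const. Qed.

Lemma perm_act_X s i : perm_act s (X i) = X (s i).
Proof.
rewrite /perm_act /xv meval_var (leq_trans (ltn_ord i) (leq_addr _ _)).
by rewrite /perm_point valK.
Qed.

Lemma perm_act_Y s i : perm_act s (Y i) = Y (s i).
Proof.
rewrite /perm_act /yv meval_var ltn_add2l ltn_ord /perm_point.
by rewrite insubF ?addKn ?valK // ltnNge leq_addr.
Qed.

Lemma symmetrize_monomial a b c :
  symmetrize (monomial a b * cst c) = cst c * symmon X Y a b.
Proof.
rewrite /symmetrize /symmon mulr_sumr mulrC; apply: eq_bigr => s _.
rewrite perm_actM perm_act_const perm_act_prod; congr (_ * _).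
by apply: eq_bigr => i _; rewrite perm_actM !perm_actX perm_act_X perm_act_Y.
Qed.

Lemma monomial_mulX a b (k : 'I_m) : monomial a b * X k = monomial (addat a k 1) b.
Proof.
rewrite /monomial (bigD1 k) //= [RHS](bigD1 k) //= /addat eqxx exprD expr1.
rewrite [in RHS](eq_bigr (fun i => X i ^+ a i * Y i ^+ b i)) => [|i /negbTE -> //].
by ring.
Qed.

Lemma monomial_mulY a b (k : 'I_m) : monomial a b * Y k = monomial a (addat b k 1).
Proof.
rewrite /monomial (bigD1 k) //= [RHS](bigD1 k) //= /addat eqxx exprD expr1.
rewrite [in RHS](eq_bigr (fun i => X i ^+ a i * Y i ^+ b i)) => [|i /negbTE -> //].
by ring.
Qed.

(* Step 4: every symmetrized polynomial is representable, by induction on P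
   with a monomial prefix as accumulator. *)
Lemma sigma_rep_symmetrize P :
  forall a b, sigma_rep (symmetrize (monomial a b * P)).
Proof.
have hG := sigma_rep_ring_closed.
elim/mpoly_ind: P => [c|p q rep_p rep_q|k p km rep_p] a b.
- rewrite symmetrize_monomial; apply: (rc_mul hG); first exact: sigma_rep_const.
  apply: (symmon_closed hG); [exact: sigma_rep_div_closed | exact: sigma_rep_psum].
- rewrite mulrDr /symmetrize; under eq_bigr do rewrite perm_actD.
  by rewrite big_split; apply: (rc_add hG); [apply: rep_p | apply: rep_q].
have [kx|mk] := ltnP k m.
  have -> : mvar R (m + m) k = X (Ordinal kx) by [].
  by rewrite mulrA monomial_mulX; apply: rep_p.
have ky : (k - m < m)%N by rewrite ltn_subLR.
have -> : mvar R (m + m) k = Y (Ordinal ky) by rewrite /yv /= subnKC.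
by rewrite mulrA monomial_mulY; apply: rep_p.
Qed.

(* An invariant P satisfies symmetrize P = m! P; divide by m!. *)
Lemma sigma_rep_invariant P :
  sym_invariant P -> sigma_rep P.
Proof.
move=> inv; have := sigma_rep_symmetrize P (fun _ => 0%N) (fun _ => 0%N).
have -> : monomial (fun _ => 0%N) (fun _ => 0%N) = 1.
  by rewrite /monomial big1 // => i _; rewrite !expr0 mulr1.
rewrite mul1r /symmetrize (eq_bigr (fun _ => P)) // sumr_const.
have : (0 < #|{perm 'I_m}|)%N by apply/card_gt0P; exists 1%g.
by case: #|_| => // n _; apply: sigma_rep_div_closed.
Qed.

End LocalModel.


Theorem lemma2p1 (R : idomainType)
    (hQ : forall n : nat, (n.+1)%:R \is a @GRing.unit R)
    (t : R) (m : nat) (P : mpoly R (m + m)) :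
  @sym_invariant R m P ->
  exists Q : mpoly R (m + m), @in_rel_ideal R m t (P - @eval_at_sigma R m Q).
Proof. exact: sigma_rep_invariant. Qed.
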